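(* Let $B=\bigoplus_{i\in\mathbb{Z}}B_i$ be a $\mathbb{Z}$-graded noetherian normal integral domain containing $\mathbb{Q}$. If $B$ is saturated in codimension $1$, then for every integer $d>0$: (a) every derivation $\delta:B^{(d)}\to B^{(d)}$ extends uniquely to a derivation $D:B\to B$; (b) every locally nilpotent derivation $\delta:B^{(d)}\to B^{(d)}$ extends uniquely to a locally nilpotent derivation $D:B\to B$.
   Context: $B^{(d)}=\bigoplus_{i\in\mathbb{Z}}B_{di}$. Derivations are not assumed homogeneous. A derivation $D$ is locally nilpotent if for each $b$ there is $n>0$ with $D^n(b)=0$. For a $\mathbb{Z}$-graded domain $C$, $e(C)=\gcd\{i\in\mathbb{Z}: C_i\neq0\}$. $B$ is saturated in codimension $1$ if $e(B/\mathfrak{p})=e(B)$ for every homogeneous prime ideal $\mathfrak{p}$ of $B$ of height $1$. *)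

From HB Require Import structures.
From mathcomp Require Import all_boot all_order all_algebra.
From mathcomp Require Import fraction.
Set Implicit Arguments. Unset Strict Implicit. Unset Printing Implicit Defensive.
Import Order.TTheory GRing.Theory Num.Theory.
Local Open Scope ring_scope.

Section GradedDefs.
Variable B : idomainType.

Definition subsetB (I J : B -> Prop) := forall x, I x -> J x.

Definition is_ideal (I : B -> Prop) : Prop :=
  [/\ I 0, (forall x y, I x -> I y -> I (x - y)) & (forall a x, I x -> I (a * x))].

Definition noetherian : Prop :=
  forall I : nat -> B -> Prop, (forall n, is_ideal (I n)) ->
  (forall n, subsetB (I n) (I n.+1)) ->
  exists N, forall n, (N <= n)%N -> forall x, I n x <-> I N x.

Definition normal_domain : Prop :=
  forall x : {fraction B},
    (exists p : {poly B}, p \is monic /\ root (map_poly (@FracField.tofrac B) p) x) ->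
    exists b : B, x = FracField.tofrac b.

Definition contains_Q : Prop := forall n : nat, (n.+1)%:R \is a @GRing.unit B.

Definition is_Zgrading (G : int -> B -> Prop) : Prop :=
  [/\ (forall i, G i 0),
      (forall i x y, G i x -> G i y -> G i (x - y)),
      (forall i j x y, G i x -> G j y -> G (i + j) (x * y)),
      (forall b, exists (s : seq int) (f : int -> B),
          [/\ uniq s, (forall i, G i (f i)) & b = \sum_(i <- s) f i])
    & (forall (s : seq int) (f : int -> B), uniq s -> (forall i, G i (f i)) ->
          \sum_(i <- s) f i = 0 -> forall i, i \in s -> f i = 0)].

Definition veronese (G : int -> B -> Prop) (d : nat) (x : B) : Prop :=
  exists (s : seq int) (f : int -> B),
    [/\ forall i, i \in s -> (d%:Z %| i)%Z /\ G i (f i) & x = \sum_(i <- s) f i].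

Definition is_prime_ideal (P : B -> Prop) : Prop :=
  [/\ is_ideal P, ~ P 1 & forall x y, P (x * y) -> P x \/ P y].

Definition is_homogeneous_ideal (G : int -> B -> Prop) (P : B -> Prop) : Prop :=
  is_ideal P /\
  forall x, P x -> forall (s : seq int) (f : int -> B),
    uniq s -> (forall i, G i (f i)) -> x = \sum_(i <- s) f i ->
    forall i, i \in s -> P (f i).

Definition height_one_prime (P : B -> Prop) : Prop :=
  [/\ is_prime_ideal P, (exists x, P x /\ x != 0) &
      forall Q, is_prime_ideal Q -> (exists x, Q x /\ x != 0) ->
        subsetB Q P -> subsetB P Q].

Definition derivation (D : B -> B) : Prop :=
  (forall x y, D (x + y) = D x + D y) /\ (forall x y, D (x * y) = x * D y + y * D x).

(* Derivation of the subring S (given as a predicate), represented by a map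
   B -> B whose values outside S are irrelevant. *)
Definition derivation_on (S : B -> Prop) (delta : B -> B) : Prop :=
  [/\ forall x, S x -> S (delta x),
      forall x y, S x -> S y -> delta (x + y) = delta x + delta y
    & forall x y, S x -> S y -> delta (x * y) = x * delta y + y * delta x].

Definition locally_nilpotent_on (S : B -> Prop) (delta : B -> B) : Prop :=
  forall x, S x -> exists n : nat, (0 < n)%N /\ iter n delta x = 0.

Definition locally_nilpotent (D : B -> B) : Prop := locally_nilpotent_on (fun _ => True) D.

End GradedDefs.

Definition is_gcd_set (S : int -> Prop) (g : int) : Prop :=
  [/\ (0 <= g)%R, (forall i, S i -> (g %| i)%Z) &
      forall c : int, (forall i, S i -> (c %| i)%Z) -> (c %| g)%Z].

Definition degset_B (B : idomainType) (G : int -> B -> Prop) (i : int) : Prop :=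
  exists b, G i b /\ b != 0.

(* For a homogeneous prime P, (B/P)_i = (B_i + P)/P is nonzero iff B_i is not inside P;
   e(B/P) = gcd{ i : (B/P)_i <> 0 }. *)
Definition degset_quot (B : idomainType) (G : int -> B -> Prop) (P : B -> Prop) (i : int) : Prop :=
  exists b, G i b /\ ~ P b.

Definition saturated_in_codim1 (B : idomainType) (G : int -> B -> Prop) : Prop :=
  forall P : B -> Prop, is_homogeneous_ideal G P -> height_one_prime P ->
    forall g1 g2, is_gcd_set (degset_quot G P) g1 -> is_gcd_set (degset_B G) g2 -> g1 = g2.

From HB Require Import structures.
From mathcomp Require Import all_boot all_order all_algebra.
From mathcomp Require Import fraction.
From Stdlib Require Import ClassicalEpsilon Classical.
From mathcomp Require Import ring zify.
Set Implicit Arguments. Unset Strict Implicit. Unset Printing Implicit Defensive.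
Import Order.TTheory GRing.Theory Num.Theory.
Local Open Scope ring_scope.

(* The point is that for homogeneous [b] the element [dpow d b = d b^(d-1)] divides
   [delta (b^d)] in [B]. Otherwise their quotient [z] is not in [B], and since [B] is
   noetherian and normal some height one prime [P] contains every [c] with [c z] in [B].
   Take [u] homogeneous outside [P] with [b u] in [B^(d)]: [u = b^(d-1)] if [b] is outside
   [P], and otherwise [u] comes from saturation in codimension 1 applied to the largest
   homogeneous ideal inside [P]. The Leibniz rule for [delta] on [b u], [b^d] and [u^d] puts
   [u^d] in [P], a contradiction.
   The quotients define [D] on homogeneous elements; [D] is additive on each degree and
   Leibniz on homogeneous elements, hence extends by components to a derivation, which is
   unique because [d h^(d-1) D h = D (h^d)]. If [delta] is locally nilpotent then so is [D]:
   for homogeneous [b] the elements [b^(d-1) D^n b] lie in [B^(d)], where [D = delta], and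
   an induction on the nilpotency order of [b^d] shows that [D^n b] vanishes. *)

Lemma sum_superset (R : nmodType) (I : eqType) (s t : seq I) (F : I -> R) :
  uniq s -> uniq t -> {subset s <= t} ->
  \sum_(i <- t) (if i \in s then F i else 0) = \sum_(i <- s) F i.
Proof.
move=> us ut sst; rewrite -big_mkcond -big_filter; apply: perm_big.
apply: uniq_perm => [||x]; rewrite ?filter_uniq //.
by rewrite mem_filter; case xs: (x \in s) => //=; rewrite sst.
Qed.

Lemma sum_pred1_seq (R : nmodType) (I : eqType) (s : seq I) (a : I) (F : I -> R) :
  uniq s -> \sum_(i <- s) (if i == a then F i else 0) = if a \in s then F a else 0.
Proof.
move=> us; case: ifP => ha.
  by rewrite (bigD1_seq a) //= eqxx big1 ?addr0 // => i /negbTE ->.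
by rewrite big1_seq // => i /andP [_ hi]; case: eqP => // e; rewrite -e hi in ha.
Qed.

Lemma sum_neq0_exists (R : nmodType) (I : eqType) (r : seq I) (F : I -> R) :
  \sum_(i <- r) F i != 0 -> exists2 i, i \in r & F i != 0.
Proof.
move=> h; apply/hasP; apply: contraNT h => /hasPn hF.
by rewrite big1_seq // => i /andP [_ /hF /negPn /eqP].
Qed.

Lemma ex_min_nat (P : nat -> Prop) :
  (exists n, P n) -> exists n, P n /\ forall m, P m -> (n <= m)%N.
Proof.
move=> [n hn]; elim: n {-2}n (leqnn n) hn => [|N IH] k hk hPk.
  by exists k; split => // m _; move: hk; rewrite leqn0 => /eqP ->.
case: (classic (exists m, P m /\ (m < k)%N)) => [[m [hm hmk]]|hno].
  by apply: (IH m) => //; rewrite -ltnS (leq_trans hmk hk).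
exists k; split => // m hm; rewrite leqNgt; apply/negP => hmk; apply: hno; by exists m.
Qed.

Lemma ex_max_seq (s : seq int) (Q : int -> Prop) :
  (exists2 k, k \in s & Q k) ->
  exists m, [/\ m \in s, Q m & forall k, k \in s -> Q k -> k <= m].
Proof.
elim: s => [|a s IH] [k hk hQk]; first by [].
have [hQa|hnQa] := classic (Q a); last first.
  have [|m [hm hQm hmax]] := IH.
    by move: hk; rewrite inE => /orP [/eqP hka|]; [rewrite hka in hQk | exists k].
  exists m; split; rewrite ?inE ?hm ?orbT // => k'; rewrite inE.
  by case/orP => [/eqP -> /hnQa|]; last exact: hmax.
case: (classic (exists2 k, k \in s & Q k)) => [/IH [m [hm hQm hmax]]|hno].
  exists (Order.max a m); split.
  - by rewrite /Order.max; case: ifP; rewrite ?inE ?hm ?eqxx ?orbT.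
  - by rewrite /Order.max; case: ifP.
  by move=> k'; rewrite inE le_max => /orP [/eqP ->|/hmax h /h ->]; rewrite ?lexx ?orbT.
exists a; split; rewrite ?mem_head // => k'; rewrite inE => /orP [/eqP -> //|hk' hQk'].
by case: hno; exists k'.
Qed.

Lemma dvdz_add_mul_pred (d' : nat) (i : int) : (d'.+1%:Z %| i + d'%:Z * i)%Z.
Proof. by rewrite -{1}[i]mul1r -mulrDl -PoszD add1n dvdz_mulr. Qed.

Definition int_comb (S : int -> Prop) (x : int) :=
  exists l : seq (int * int), (forall p, p \in l -> S p.2) /\ x = \sum_(p <- l) p.1 * p.2.

Section IntComb.
Variable S : int -> Prop.

Lemma int_combD x y : int_comb S x -> int_comb S y -> int_comb S (x + y).
Proof.
move=> [l [hl ->]] [l' [hl' ->]]; exists (l ++ l'); split; last by rewrite big_cat.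
by move=> p; rewrite mem_cat => /orP [/hl|/hl'].
Qed.

Lemma int_combMl c x : int_comb S x -> int_comb S (c * x).
Proof.
move=> [l [hl ->]]; exists [seq (c * p.1, p.2) | p <- l]; split.
  by move=> p /mapP [q hq ->]; exact: (hl q hq).
by rewrite big_map mulr_sumr; apply: eq_bigr => p _; rewrite mulrA.
Qed.

Lemma int_comb_mem s : S s -> int_comb S s.
Proof.
move=> hs; exists [:: (1, s)]; split; last by rewrite big_seq1 mul1r.
by move=> p; rewrite inE => /eqP ->.
Qed.

Lemma dvdz_int_comb c x : (forall i, S i -> (c %| i)%Z) -> int_comb S x -> (c %| x)%Z.
Proof.
move=> hc [l [hl ->]]; rewrite big_seq; apply: rpred_sum => p hp.
by apply: dvdz_mull; apply: hc; apply: hl.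
Qed.

(* The gcd is the least positive integer combination (or 0 if there is none). *)
Lemma gcd_set_int_comb : exists g, is_gcd_set S g /\ int_comb S g.
Proof.
case: (classic (exists n, (0 < n)%N /\ int_comb S n%:Z)) => [hex|hno]; last first.
  exists 0; split; last by exists [::]; rewrite big_nil.
  split=> // i hi; apply: contraT; rewrite dvd0z => i0; case: hno.
  exists `|i|%N; rewrite absz_gt0; split=> //; rewrite abszE.
  have [i_ge0|i_lt0] := lerP 0 i; first by rewrite ger0_norm //; exact: int_comb_mem.
  by rewrite ltr0_norm // -mulN1r; apply: int_combMl; apply: int_comb_mem.
have [n [[n0 hn] hmin]] := ex_min_nat hex.
exists n%:Z; split=> //; split=> // [i hi|c hc]; last exact: dvdz_int_comb hc hn.
have hr : int_comb S (i %% n)%Z.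
  have -> : (i %% n)%Z = i + (- (i %/ n)%Z) * n%:Z by rewrite {2}(divz_eq i n); ring.
  by apply: int_combD; [apply: int_comb_mem | apply: int_combMl].
have r0 : 0 <= (i %% n)%Z by apply: modz_ge0; rewrite eqz_nat -lt0n.
apply/dvdz_mod0P/eqP; apply: contraT => r_neq0.
have : (i %% n)%Z < n by apply: ltz_pmod; rewrite ltz_nat.
rewrite -(gez0_abs r0) ltz_nat ltnNge hmin //.
by rewrite absz_gt0 gez0_abs.
Qed.

End IntComb.

(** * Ideals, conductors and height one primes *)

Section Ideals.
Variable B : idomainType.
Implicit Types P Q : B -> Prop.

Lemma is_ideal0 P : is_ideal P -> P 0. Proof. by case. Qed.

Lemma is_idealB P x y : is_ideal P -> P x -> P y -> P (x - y).
Proof. by case=> _ h _; apply: h. Qed.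

Lemma is_idealMl P a x : is_ideal P -> P x -> P (a * x).
Proof. by case=> _ _ h; apply: h. Qed.

Lemma is_idealMr P a x : is_ideal P -> P x -> P (x * a).
Proof. by rewrite mulrC; apply: is_idealMl. Qed.

Lemma is_idealD P x y : is_ideal P -> P x -> P y -> P (x + y).
Proof.
move=> hP hx hy; rewrite -[y]opprK; apply: is_idealB => //.
by rewrite -sub0r; apply: is_idealB => //; apply: is_ideal0.
Qed.

Lemma is_ideal_sum P (I : eqType) (r : seq I) (p : pred I) (F : I -> B) :
  is_ideal P -> (forall i, i \in r -> p i -> P (F i)) -> P (\sum_(i <- r | p i) F i).
Proof.
move=> hP hF; rewrite big_seq_cond; elim/big_ind: _ => [|x y|i /andP []].
- exact: is_ideal0.
- exact: is_idealD.
- exact: hF.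
Qed.

Lemma prime_memX P x n : is_prime_ideal P -> P (x ^+ n) -> P x.
Proof.
case=> hI _ hm; elim: n => [|n IH].
  by rewrite expr0 => h; rewrite -[x]mulr1; apply: is_idealMl hI h.
by rewrite exprS => /hm [] // /IH.
Qed.

Lemma prime_notinM P x y : is_prime_ideal P -> ~ P x -> ~ P y -> ~ P (x * y).
Proof. by case=> _ _ hm hx hy /hm []. Qed.

Lemma prime_notinX P x n : is_prime_ideal P -> ~ P x -> ~ P (x ^+ n).
Proof. by move=> hP hx /(prime_memX hP). Qed.

Lemma noetherian_maximal (X : Type) (I : X -> B -> Prop) (S : X -> Prop) :
  noetherian B -> (forall x, is_ideal (I x)) -> (exists x, S x) ->
  exists x, S x /\ forall y, S y -> subsetB (I x) (I y) -> subsetB (I y) (I x).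
Proof.
move=> hN hI [x0 hx0]; apply: NNPP => hno.
have step : forall x : {x | S x}, {y : {y | S y} |
    subsetB (I (sval x)) (I (sval y)) /\ ~ subsetB (I (sval y)) (I (sval x))}.
  move=> [x hx]; apply: constructive_indefinite_description.
  have /not_all_ex_not [y] : ~ forall y, S y -> subsetB (I x) (I y) -> subsetB (I y) (I x).
    by move=> h; apply: hno; exists x.
  move=> hy; have [Sy hn] := imply_to_and _ _ hy; have [h1 h2] := imply_to_and _ _ hn.
  by exists (exist _ y Sy).
pose fix chain n := if n is n'.+1 then sval (step (chain n')) else exist S x0 hx0.
have [N hNN] := hN (fun n => I (sval (chain n))) (fun n => hI _)
   (fun n => proj1 (svalP (step (chain n)))).
apply: (proj2 (svalP (step (chain N)))) => x hx.
exact/(hNN N.+1 (leqnSn N)).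
Qed.

End Ideals.

Section Conductor.
Variable B : idomainType.
Local Notation tf := (@FracField.tofrac B).
Local Notation K := {fraction B}.

Definition in_ring (w : K) := exists b, tf b = w.

Definition colon (w : K) (t : B) := in_ring (tf t * w).

Lemma tofrac_inj : injective tf.
Proof. by move=> x y /eqP; rewrite tofrac_eq => /eqP. Qed.

Lemma colon_exists_neq0 (w : K) : exists2 q : B, q != 0 & colon w q.
Proof.
elim/quotW: w => -[[n e] /= e0]; exists e => //; exists n.
rewrite !piE; apply/eqmodP; rewrite /= FracField.equivfE.
by rewrite !numden_Ratio ?mulf_neq0 ?oner_eq0 //= !mul1r mulrC.
Qed.

Lemma colon_ideal (w : K) : is_ideal (colon w).
Proof.
split.
- by exists 0; rewrite tofrac0 mul0r.
- move=> x y [a ea] [b eb]; exists (a - b).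
  by rewrite tofracB ea eb tofracB mulrBl.
- move=> a x [b eb]; exists (a * b).
  by rewrite !tofracM eb mulrA.
Qed.

Lemma colon_mulr (w : K) (x : B) : subsetB (colon w) (colon (tf x * w)).
Proof. by move=> t [a ea]; exists (x * a); rewrite tofracM ea mulrCA. Qed.

Hypothesis hN : noetherian B.
Hypothesis hnorm : normal_domain B.

(* The ideals of values [q p(w)], [deg p <= n], stabilize, which makes [w] integral. *)
Lemma almost_integral (q : B) (w : K) :
  q != 0 -> (forall n, in_ring (tf q * w ^+ n)) -> in_ring w.
Proof.
move=> q0 hv.
pose I n (t : B) :=
  exists p : {poly B}, (size p <= n.+1)%N /\ tf t = tf q * (map_poly tf p).[w].
have hI n : is_ideal (I n).
  split.
  - by exists 0; split; rewrite ?size_poly0 // map_poly0 horner0 mulr0 tofrac0.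
  - move=> x y [p [hp ex]] [p' [hp' ey]]; exists (p - p'); split.
      by apply: leq_trans (size_polyD _ _) _; rewrite size_polyN geq_max hp hp'.
    by rewrite tofracB ex ey rmorphB hornerD hornerN mulrDr mulrN.
  - move=> a x [p [hp ex]]; exists (a *: p); split.
      exact: leq_trans (size_scale_leq _ _) hp.
    by rewrite tofracM ex map_polyZ hornerZ mulrCA.
have hsub n : subsetB (I n) (I n.+1).
  by move=> t [p [hp e]]; exists p; split => //; apply: leq_trans hp _.
have [N hNN] := hN hI hsub.
have [v hv'] := hv N.+1.
have : I N.+1 v.
  exists 'X^(N.+1); split; first by rewrite size_polyXn.
  by rewrite map_polyXn hornerXn.
move/(hNN N.+1 (leqnSn N)) => [p [hp ev]].
suff [b ->] : exists b, w = tf b by exists b.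
apply: hnorm; exists ('X^(N.+1) - p); split.
  by rewrite monicE lead_coefDl ?lead_coefXn // size_polyN size_polyXn ltnS.
rewrite rootE rmorphB /= map_polyXn hornerD hornerN hornerXn subr_eq0.
have q0' : tf q != 0 by rewrite tofrac_eq0.
by apply/eqP/(mulfI q0'); rewrite -hv' ev.
Qed.

Lemma colon_escape (q : B) (w : K) : ~ in_ring w -> q != 0 ->
  exists n v, tf v = tf q * w ^+ n /\ ~ colon w v.
Proof.
move=> hw q0; apply: NNPP => hn; apply: hw; apply: (almost_integral q0).
elim=> [|n [v ev]]; first by exists q; rewrite expr0 mulr1.
have [v' ev'] : colon w v by apply: NNPP => hv; apply: hn; exists n, v.
by exists v'; rewrite ev' ev exprSr mulrA.
Qed.

Lemma colon_height_one (w : K) :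
  ~ in_ring w -> is_prime_ideal (colon w) -> height_one_prime (colon w).
Proof.
move=> hw hP; split=> //.
  have [q q0 hq] := colon_exists_neq0 w; by exists q.
move=> Q hQ [q [hq q0]] hQP t [s es].
have [n [v [ev hv]]] := colon_escape hw q0.
have [hQI _ hQm] := hQ.
have : Q (t ^+ n * v).
  suff -> : t ^+ n * v = q * s ^+ n by apply: is_idealMr hQI hq.
  by apply: tofrac_inj; rewrite !tofracM !tofracXn ev es exprMn mulrCA.
by case/hQm => [/(prime_memX hQ) //|/hQP].
Qed.

Lemma conductor_height_one (z : K) :
  ~ in_ring z -> exists P, height_one_prime P /\ subsetB (colon z) P.
Proof.
move=> hz.
pose S w := (exists u, w = tf u * z) /\ ~ in_ring w.
have [|w [[[u ->] hw] hmax]] := noetherian_maximal hN colon_ideal (ex_intro S z _).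
  by split=> //; exists 1; rewrite tofrac1 mul1r.
exists (colon (tf u * z)); split; last first.
  by move=> t [s es]; exists (u * s); rewrite tofracM es mulrCA.
apply: colon_height_one => //; split; first exact: colon_ideal.
  by rewrite /colon tofrac1 mul1r.
move=> x y hxy; apply: NNPP => /not_or_and [hx hy]; apply: hy.
apply: (hmax (tf x * (tf u * z))); last by rewrite /colon mulrA -tofracM [y * x]mulrC.
- by split=> //; exists (x * u); rewrite tofracM mulrA.
- exact: colon_mulr.
Qed.

End Conductor.

(** * Derivations *)

Lemma contains_Q_natr_neq0 (B : idomainType) (n : nat) :
  contains_Q B -> n.+1%:R != 0 :> B.
Proof. by move/(_ n); apply: contraTneq => ->; rewrite unitr0. Qed.

Definition dpow (R : pzSemiRingType) (n : nat) (x : R) := n%:R * x ^+ n.-1.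

Lemma nilpotency_order (R : nmodType) (f : R -> R) (x : R) :
  x != 0 -> (exists p, iter p f x = 0) -> exists m, iter m f x != 0 /\ iter m.+1 f x = 0.
Proof.
move=> x0 hx; have [[|m] [hm hmin]] := ex_min_nat hx.
  by move: x0; rewrite -[x]/(iter 0 f x) hm eqxx.
by exists m; split=> //; apply/eqP => /hmin; rewrite ltnn.
Qed.

Section DerivationOn.
Variable B : idomainType.
Variable S : B -> Prop.
Hypothesis S0 : S 0.
Hypothesis SD : forall x y, S x -> S y -> S (x + y).
Hypothesis SM : forall x y, S x -> S y -> S (x * y).
Variable delta : B -> B.
Hypothesis hdelta : derivation_on S delta.

Lemma derivation_on0 : delta 0 = 0.
Proof.
case: hdelta => _ hD _; apply: (@addrI _ (delta 0)).
by rewrite -hD // !addr0.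
Qed.

Lemma derivation_on_sum (I : Type) (r : seq I) (F : I -> B) :
  (forall l, S (F l)) -> delta (\sum_(l <- r) F l) = \sum_(l <- r) delta (F l).
Proof.
case: hdelta => _ hD _ hF; elim: r => [|a r IH]; first by rewrite !big_nil derivation_on0.
rewrite !big_cons hD ?IH //; apply: (big_ind S) => //.
Qed.

Lemma derivation_onX x n : S x -> delta (x ^+ n.+1) = dpow n.+1 x * delta x.
Proof.
case: hdelta => _ _ hM hx; rewrite /dpow /=.
elim: n => [|n IH]; first by rewrite expr1 expr0 mulr1 mul1r.
have hxn : S (x ^+ n.+1) by elim: n {IH} => [|n IH]; rewrite ?expr1 // exprS; apply: SM.
by rewrite exprS hM // IH exprS -[n.+2]addn1 natrD; ring.
Qed.

End DerivationOn.

Section Derivation.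
Variable B : idomainType.
Variable E : B -> B.
Hypothesis hE : derivation E.

Lemma derivationT : derivation_on (fun _ => True) E.
Proof. by case: hE => hD hM; split. Qed.

Lemma derivationD x y : E (x + y) = E x + E y. Proof. by case: hE. Qed.

Lemma derivationM x y : E (x * y) = x * E y + y * E x. Proof. by case: hE. Qed.

Lemma derivation0 : E 0 = 0. Proof. exact: derivation_on0 derivationT. Qed.

Lemma derivation1 : E 1 = 0.
Proof.
have h := derivationM 1 1; rewrite mulr1 mul1r in h.
by apply: (@addrI _ (E 1)); rewrite -h addr0.
Qed.

Lemma derivation_sum (I : Type) (r : seq I) (F : I -> B) :
  E (\sum_(l <- r) F l) = \sum_(l <- r) E (F l).
Proof. exact: (big_morph E derivationD derivation0). Qed.

Lemma derivationX h n : E (h ^+ n.+1) = dpow n.+1 h * E h.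
Proof. exact: (@derivation_onX _ _ (fun _ _ _ _ => I) _ derivationT h n I). Qed.

Lemma mulr_derivationX h n : h * E (h ^+ n) = n%:R * h ^+ n * E h.
Proof.
case: n => [|n]; first by rewrite expr0 derivation1 mulr0 !mul0r.
by rewrite derivationX /dpow /= exprS; ring.
Qed.

Lemma iter_derivation0 n : iter n E 0 = 0.
Proof. by elim: n => //= n ->; apply: derivation0. Qed.

Lemma iter_derivationD n x y : iter n E (x + y) = iter n E x + iter n E y.
Proof. by elim: n => //= n ->; apply: derivationD. Qed.

Lemma iter_derivationN n x : iter n E (- x) = - iter n E x.
Proof. by apply/eqP; rewrite -subr_eq0 opprK -iter_derivationD addNr iter_derivation0. Qed.

Lemma iter_derivation_natmul n k x : iter n E (k%:R * x) = k%:R * iter n E x.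
Proof.
rewrite !mulr_natl; elim: k => [|k IH]; first by rewrite !mulr0n iter_derivation0.
by rewrite !mulrS iter_derivationD IH.
Qed.

Lemma iter_derivation_eq0 x p k : iter p E x = 0 -> iter (k + p) E x = 0.
Proof. by move=> h; rewrite iterD h iter_derivation0. Qed.

Lemma iter_derivationM_eq0 p q x y :
  iter p E x = 0 -> iter q E y = 0 -> iter (p + q).-1 E (x * y) = 0.
Proof.
elim: p q x y => [|p IHp] q x y hx hy.
  by rewrite /= in hx; rewrite hx mul0r iter_derivation0.
elim: q y hy => [|q IHq] y hy.
  by rewrite /= in hy; rewrite hy mulr0 iter_derivation0.
have hx' : iter p E (E x) = 0 by rewrite -iterSr.
have hy' : iter q E (E y) = 0 by rewrite -iterSr.
rewrite addSn addnS succnK iterSr derivationM iter_derivationD [y * E x]mulrC.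
have := IHq _ hy'; rewrite addSn succnK => ->.
by have := IHp _ _ _ hx' hy; rewrite addnS succnK => ->; rewrite addr0.
Qed.

Lemma iter_derivation_mull x y k : E x = 0 -> iter k E (x * y) = x * iter k E y.
Proof. by move=> hx; elim: k => //= k ->; rewrite derivationM hx mulr0 addr0. Qed.

Lemma iter_derivationM_top m m' x y :
  iter m.+1 E x = 0 -> iter m'.+1 E y = 0 ->
  exists2 C, (0 < C)%N & iter (m + m') E (x * y) = C%:R * (iter m E x * iter m' E y).
Proof.
elim: m m' x y => [|m IHm] m' x y hx hy.
  by exists 1%N; rewrite // mul1r iter_derivation_mull.
elim: m' y hy => [|m' IHm'] y hy.
  by exists 1%N; rewrite // mul1r addn0 mulrC iter_derivation_mull // mulrC.
have hx' : iter m.+1 E (E x) = 0 by rewrite -iterSr.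
have hy' : iter m'.+1 E (E y) = 0 by rewrite -iterSr.
have [C1 C1_gt0 e1] := IHm' (E y) hy'.
have [C2 C2_gt0 e2] := IHm m'.+1 (E x) y hx' hy.
exists (C1 + C2)%N; first by rewrite addn_gt0 C1_gt0.
rewrite addnS iterSr derivationM iter_derivationD [y * E x]mulrC e1 addSnnS e2.
by rewrite -!iterSr natrD; ring.
Qed.

Hypothesis hQ : contains_Q B.

(* Multiplication by [a] shifts nilpotency orders by the exact order of [a]:
   the top term of the Leibniz expansion is a nonzero multiple of a product of nonzero factors. *)
Lemma iter_derivation_cancel a c X m :
  iter c E a != 0 -> iter c.+1 E a = 0 -> (exists p, iter p E X = 0) ->
  iter (c + m) E (a * X) = 0 -> iter m E X = 0.
Proof.
move=> ha ha' hX hk.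
have [->|X0] := eqVneq X 0; first by rewrite iter_derivation0.
have [m' [hm1 hm2]] := nilpotency_order X0 hX.
have [hm|hm] := leqP m'.+1 m; first by rewrite -(subnK hm) iter_derivation_eq0.
have [[|C] // _ e] := iter_derivationM_top ha' hm2.
have : iter (c + m') E (a * X) = 0.
  have -> : (c + m')%N = ((m' - m) + (c + m))%N by lia.
  exact: iter_derivation_eq0.
rewrite e => /eqP; rewrite !mulf_eq0 (negbTE (contains_Q_natr_neq0 C hQ)).
by rewrite (negbTE ha) (negbTE hm1).
Qed.

End Derivation.

(** * Homogeneous components *)

Section Grading.
Variable B : idomainType.
Variable G : int -> B -> Prop.
Hypothesis HG : is_Zgrading G.

Lemma grading0 i : G i 0. Proof. by case: HG. Qed.

Lemma gradingB i x y : G i x -> G i y -> G i (x - y).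
Proof. by case: HG => _ h _ _ _; apply: h. Qed.

Lemma gradingM i j x y : G i x -> G j y -> G (i + j) (x * y).
Proof. by case: HG => _ _ h _ _; apply: h. Qed.

Lemma gradingN i x : G i x -> G i (- x).
Proof. by move=> h; rewrite -sub0r; apply: gradingB => //; apply: grading0. Qed.

Lemma gradingD i x y : G i x -> G i y -> G i (x + y).
Proof. by move=> hx hy; rewrite -[y]opprK; apply: gradingB => //; apply: gradingN. Qed.

Definition hdecomp (x : B) : {sf : seq int * (int -> B) |
   [/\ uniq sf.1, (forall i, G i (sf.2 i)) & x = \sum_(i <- sf.1) sf.2 i]}.
Proof.
apply: constructive_indefinite_description.
by case: HG => _ _ _ h _; have [s [f [u hf e]]] := h x; exists (s, f).
Defined.

(* [hsupp x] is some finite list of degrees containing the support of [x]. *)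
Definition hsupp x := (sval (hdecomp x)).1.
Definition hcomp x i := if i \in hsupp x then (sval (hdecomp x)).2 i else 0.

Lemma hsupp_uniq x : uniq (hsupp x). Proof. by case: (svalP (hdecomp x)). Qed.

Lemma hcompP x i : G i (hcomp x i).
Proof.
rewrite /hcomp; case: ifP => _; last exact: grading0.
by case: (svalP (hdecomp x)).
Qed.

Lemma hcomp_notin x i : i \notin hsupp x -> hcomp x i = 0.
Proof. by rewrite /hcomp => /negbTE ->. Qed.

Lemma hcomp_sum x : x = \sum_(i <- hsupp x) hcomp x i.
Proof.
case: (svalP (hdecomp x)) => _ _ e; rewrite {1}e.
by apply: eq_big_seq => i hi; rewrite /hcomp /hsupp hi.
Qed.

Lemma hcomp_sum_superset x t :
  uniq t -> {subset hsupp x <= t} -> \sum_(i <- t) hcomp x i = x.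
Proof.
move=> ut st; rewrite [RHS]hcomp_sum -(sum_superset _ (hsupp_uniq x) ut st).
by apply: eq_bigr => i _; case: ifP => // /negbT /hcomp_notin.
Qed.

Lemma hcomp_unique (s : seq int) (f : int -> B) x :
  uniq s -> (forall i, G i (f i)) -> x = \sum_(i <- s) f i ->
  forall i, hcomp x i = if i \in s then f i else 0.
Proof.
move=> us hf ex.
set t := undup (s ++ hsupp x).
have ut : uniq t by exact: undup_uniq.
pose g i := (if i \in s then f i else 0) - hcomp x i.
have hg i : G i (g i).
  by apply: gradingB; [case: ifP => _ //; apply: grading0 | exact: hcompP].
have sum0 : \sum_(i <- t) g i = 0.
  rewrite sumrB sum_superset ?hcomp_sum_superset -?ex ?subrr //.
  - by move=> i hi; rewrite mem_undup mem_cat hi orbT.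
  - by move=> i hi; rewrite mem_undup mem_cat hi.
case: HG => _ _ _ _ hind i; case it: (i \in t).
  by have /eqP := hind t g ut hg sum0 i it; rewrite subr_eq0 => /eqP <-.
move/negbT: it; rewrite mem_undup mem_cat negb_or => /andP [/negbTE -> /hcomp_notin].
by [].
Qed.

Lemma hcomp_hom j h : G j h -> forall k, hcomp h k = if k == j then h else 0.
Proof.
move=> hh k; rewrite (@hcomp_unique [:: j] (fun i => if i == j then h else 0) h) //.
- by rewrite inE; case: (k == j).
- by move=> i; case: eqP => [->|_] //; apply: grading0.
- by rewrite big_seq1 eqxx.
Qed.

Lemma hcomp0 k : hcomp 0 k = 0.
Proof. by rewrite (hcomp_hom (grading0 0)); case: ifP. Qed.

Lemma hcompD x y k : hcomp (x + y) k = hcomp x k + hcomp y k.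
Proof.
set t := undup (hsupp x ++ hsupp y).
rewrite (@hcomp_unique t (fun i => hcomp x i + hcomp y i) (x + y)) ?undup_uniq //.
- case: ifP => // /negbT; rewrite mem_undup mem_cat negb_or => /andP [hx hy].
  by rewrite !hcomp_notin // addr0.
- by move=> i; apply: gradingD; apply: hcompP.
rewrite big_split /= !hcomp_sum_superset ?undup_uniq // => i hi.
  by rewrite mem_undup mem_cat hi orbT.
by rewrite mem_undup mem_cat hi.
Qed.

Lemma hcomp_big (I : Type) (r : seq I) (F : I -> B) k :
  hcomp (\sum_(l <- r) F l) k = \sum_(l <- r) hcomp (F l) k.
Proof. exact: (big_morph (fun x => hcomp x k) (fun x y => hcompD x y k) (hcomp0 k)). Qed.

Lemma hcompN x k : hcomp (- x) k = - hcomp x k.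
Proof. by apply/eqP; rewrite -subr_eq0 opprK -hcompD addNr hcomp0. Qed.

Lemma hcompB x y k : hcomp (x - y) k = hcomp x k - hcomp y k.
Proof. by rewrite hcompD hcompN. Qed.

Lemma hcompMl_hom e h y k : G e h -> hcomp (h * y) k = h * hcomp y (k - e).
Proof.
move=> hh; rewrite {1}(hcomp_sum y) mulr_sumr hcomp_big.
rewrite (eq_bigr (fun i => if i == k - e then h * hcomp y i else 0)).
  rewrite sum_pred1_seq ?hsupp_uniq //.
  by case: ifP => // /negbT /hcomp_notin ->; rewrite mulr0.
by move=> i _; rewrite (hcomp_hom (gradingM hh (hcompP y i))) [e + i]addrC -subr_eq eq_sym.
Qed.

Lemma hcompM x y k :
  hcomp (x * y) k = \sum_(i <- hsupp x) hcomp x i * hcomp y (k - i).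
Proof.
rewrite {1}(hcomp_sum x) mulr_suml hcomp_big; apply: eq_bigr => i _.
exact: hcompMl_hom (hcompP x i).
Qed.

Lemma grading1 : G 0 1.
Proof.
have [k _ hk] : exists2 k, k \in hsupp 1 & hcomp 1 k != 0.
  by apply: sum_neq0_exists; rewrite -hcomp_sum oner_eq0.
have hz m : m != 0 -> hcomp 1 m = 0.
  move=> m0; have := hcompMl_hom 1 (m + k) (hcompP 1 k).
  rewrite mulr1 (hcomp_hom (hcompP 1 k)) addrK.
  rewrite (_ : (m + k == k) = false); last by apply/negbTE; rewrite -subr_eq0 addrK.
  by move/esym/eqP; rewrite mulf_eq0 (negbTE hk) => /eqP.
suff -> : (1 : B) = hcomp 1 0 by exact: hcompP.
rewrite {1}(hcomp_sum 1) (eq_bigr (fun m => if m == 0 then hcomp 1 m else 0)).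
  rewrite sum_pred1_seq ?hsupp_uniq //.
  by case: ifP => // /negbT /hcomp_notin ->.
by move=> m _; case: eqP => // /eqP /hz.
Qed.

Lemma gradingX i h n : G i h -> G (n%:Z * i) (h ^+ n).
Proof.
move=> hh; elim: n => [|n IH]; first by rewrite mul0r expr0; apply: grading1.
by rewrite exprS -add1n PoszD mulrDl mul1r; apply: gradingM.
Qed.

Definition deg_cong (d : nat) (r : int) (x : B) :=
  forall k, hcomp x k != 0 -> (d%:Z %| k - r)%Z.

Section DegCong.
Variables (d : nat) (r : int).

Lemma deg_cong0 : deg_cong d r 0.
Proof. by move=> k; rewrite hcomp0 eqxx. Qed.

Lemma deg_congD x y : deg_cong d r x -> deg_cong d r y -> deg_cong d r (x + y).
Proof.
move=> hx hy k; rewrite hcompD.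
by have [e|/hx //] := eqVneq (hcomp x k) 0; rewrite e add0r => /hy.
Qed.

Lemma deg_cong_sum (I : Type) (s : seq I) (F : I -> B) :
  (forall i, deg_cong d r (F i)) -> deg_cong d r (\sum_(i <- s) F i).
Proof.
by move=> hF; apply: (big_ind (deg_cong d r)) => //; [exact: deg_cong0 | exact: deg_congD].
Qed.

Lemma deg_cong_hom h : G r h -> deg_cong d r h.
Proof.
by move=> hh k; rewrite (hcomp_hom hh); case: (k =P r) => [-> _|_]; rewrite ?subrr ?dvdz0 ?eqxx.
Qed.

Lemma deg_cong_shift r' x : (d%:Z %| r - r')%Z -> deg_cong d r x -> deg_cong d r' x.
Proof.
move=> hr hx k /hx h; rewrite (_ : k - r' = (k - r) + (r - r')); last by ring.
exact: rpredD.
Qed.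

End DegCong.

Lemma deg_congM d r r' x y :
  deg_cong d r x -> deg_cong d r' y -> deg_cong d (r + r') (x * y).
Proof.
move=> hx hy k; rewrite hcompM => /sum_neq0_exists [i _]; rewrite mulf_eq0 negb_or.
case/andP => /hx h1 /hy h2; rewrite (_ : k - (r + r') = (i - r) + (k - i - r')); last by ring.
exact: rpredD.
Qed.

Lemma veroneseP d x : veronese G d x <-> deg_cong d 0 x.
Proof.
split.
  case=> s [f [hf ->]] k; rewrite hcomp_big => /sum_neq0_exists [i hi].
  case: (hf i hi) => hd hg; rewrite (hcomp_hom hg).
  by case: (k =P i) => [-> _|_]; rewrite ?subr0 ?eqxx.
move=> hx; exists [seq i <- hsupp x | (d%:Z %| i)%Z], (hcomp x); split.
  by move=> i; rewrite mem_filter => /andP [h _]; split => //; apply: hcompP.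
rewrite big_filter {1}(hcomp_sum x) (bigID (fun i => (d%:Z %| i)%Z)) /=.
rewrite [X in _ + X]big1 ?addr0 // => i /negbTE hi.
by apply/eqP; apply: contraFT hi => /hx; rewrite subr0.
Qed.

Lemma veronese_hom d i h : G i h -> (d%:Z %| i)%Z -> veronese G d h.
Proof.
move=> hh hd; apply/veroneseP; apply: deg_cong_shift (deg_cong_hom d hh).
by rewrite subr0.
Qed.

End Grading.

Section HomogeneousCore.
Variable B : idomainType.
Variable G : int -> B -> Prop.
Hypothesis HG : is_Zgrading G.
Local Notation hcomp := (hcomp HG).
Local Notation hsupp := (hsupp HG).
Variable P : B -> Prop.
Hypothesis hP : is_prime_ideal P.

Let P_ideal : is_ideal P. Proof. by case: hP. Qed.

Definition hcore (x : B) := forall k, P (hcomp x k).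

Lemma hcore_sub x : hcore x -> P x.
Proof. by move=> hx; rewrite (hcomp_sum HG x); apply: is_ideal_sum => // i _ _; apply: hx. Qed.

Lemma hcore_hom j h : G j h -> P h -> hcore h.
Proof. by move=> hh hPh k; rewrite (hcomp_hom HG hh); case: ifP => _ //; apply: is_ideal0. Qed.

Lemma hcore_ideal : is_ideal hcore.
Proof.
split.
- by move=> k; rewrite hcomp0; apply: is_ideal0.
- by move=> x y hx hy k; rewrite hcompB; apply: is_idealB.
- by move=> a x hx k; rewrite hcompM; apply: is_ideal_sum => // i _ _; apply: is_idealMl.
Qed.

Lemma hcore_homogeneous : is_homogeneous_ideal G hcore.
Proof.
split; first exact: hcore_ideal.
move=> x hx s f us hf ex i hi k; rewrite (hcomp_hom HG (hf i)).
case: ifP => _; last exact: is_ideal0.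
by have := hcomp_unique HG us hf ex i; rewrite hi => <-.
Qed.

Lemma hcore_notin_top x :
  ~ hcore x -> exists i0, ~ P (hcomp x i0) /\ forall k, i0 < k -> P (hcomp x k).
Proof.
move/not_all_ex_not => [k hk].
have hex : exists2 k, k \in hsupp x & ~ P (hcomp x k).
  exists k => //; case hks: (k \in hsupp x) => //; case: hk.
  by rewrite hcomp_notin ?hks //; apply: is_ideal0.
have [m [hm hQm hmax]] := ex_max_seq hex.
exists m; split => // k' hk'; apply: NNPP => hn.
case hks: (k' \in hsupp x); last by apply: hn; rewrite hcomp_notin ?hks //; apply: is_ideal0.
by have := hmax k' hks hn; rewrite leNgt hk'.
Qed.

(* The top-degree component of a product is the product of the top components. *)
Lemma hcore_prime : is_prime_ideal hcore.
Proof.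
split; first exact: hcore_ideal.
  by move/hcore_sub; case: hP.
move=> x y hxy; apply: NNPP => /not_or_and [hx hy].
have [i0 [hi0 hi0m]] := hcore_notin_top hx.
have [j0 [hj0 hj0m]] := hcore_notin_top hy.
have i0_in : i0 \in hsupp x.
  case hin: (i0 \in hsupp x) => //; case: hi0.
  by rewrite hcomp_notin ?hin //; apply: is_ideal0.
have := hxy (i0 + j0); rewrite hcompM (bigD1_seq i0) ?hsupp_uniq //= addrAC subrr add0r.
move=> hsum; apply: (prime_notinM hP hi0 hj0).
have hrest : P (\sum_(i <- hsupp x | i != i0) hcomp x i * hcomp y (i0 + j0 - i)).
  apply: is_ideal_sum => // i _ hii0.
  have [hlt|hle] := ltrP i0 i; first by apply: is_idealMr => //; apply: hi0m.
  by apply: is_idealMl => //; apply: hj0m; rewrite lt_neqAle in hle *; lia.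
by have := is_idealB P_ideal hsum hrest; rewrite addrK.
Qed.

Lemma hcore_height_one i b :
  height_one_prime P -> G i b -> b != 0 -> P b -> height_one_prime hcore.
Proof.
case=> _ _ hP1 hb b0 hPb; split; first exact: hcore_prime.
  by exists b; split => //; apply: hcore_hom hb hPb.
move=> Q hQ hQ0 hQs x hx; apply: (hP1 Q hQ hQ0); last exact: hcore_sub.
by move=> y /hQs; apply: hcore_sub.
Qed.

Lemma exists_hom_notin_deg_comb (d : nat) (l : seq (int * int)) m : (0 < d)%N ->
  (forall p, p \in l -> degset_quot G hcore p.2) ->
  exists j u, [/\ G j u, ~ P u & (d%:Z %| j + m * \sum_(p <- l) p.1 * p.2)%Z].
Proof.
move=> d_gt0; elim: l => [|[n j] l IH] hl.
  exists 0, 1; split; [exact: grading1 | by case: hP | by rewrite big_nil mulr0 addr0].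
have [|j' [u' [hu' hPu' hdu']]] := IH; first by move=> p hp; apply: hl; rewrite inE hp orbT.
have [c [hc hnc]] := hl (n, j) (mem_head _ _).
have hPc : ~ P c by move=> h; apply: hnc; apply: hcore_hom hc h.
set r := ((- m * n) %% d%:Z)%Z.
have r_ge0 : 0 <= r by apply: modz_ge0; rewrite eqz_nat -lt0n.
exists (j' + r * j), (u' * c ^+ `|r|%N); split.
- by apply: gradingM => //; rewrite -{1}(gez0_abs r_ge0); apply: gradingX.
- by apply: prime_notinM => //; apply: prime_notinX.
rewrite big_cons /= (_ : _ + _ = (j' + m * \sum_(p <- l) p.1 * p.2) + (r - (- m * n)) * j).
  by apply: rpredD => //; apply: dvdz_mulr; rewrite -eqz_mod_dvd modz_mod.
by ring.
Qed.

End HomogeneousCore.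

Lemma exists_hom_notin_dvd_deg (B : idomainType) (G : int -> B -> Prop) (HG : is_Zgrading G)
    (P : B -> Prop) (d : nat) i b :
  saturated_in_codim1 G -> height_one_prime P -> (0 < d)%N ->
  G i b -> b != 0 -> P b -> exists j u, [/\ G j u, ~ P u & (d%:Z %| i + j)%Z].
Proof.
move=> hsat hP1 d_gt0 hb b0 hPb; have [hP _ _] := hP1.
have [g1 [hg1 [l [hl el]]]] := gcd_set_int_comb (degset_quot G (hcore HG P)).
have [g2 [hg2 _]] := gcd_set_int_comb (degset_B G).
have e12 := hsat _ (hcore_homogeneous HG hP) (hcore_height_one HG hP hP1 hb b0 hPb) _ _ hg1 hg2.
have /dvdzP [q ->] : (g2 %| i)%Z by case: hg2 => _ h _; apply: h; exists b.
have [j [u [hu hPu hd]]] := exists_hom_notin_deg_comb hP q d_gt0 hl.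
by exists j, u; split => //; rewrite -e12 el addrC.
Qed.

(** * Derivations of the Veronese subring *)

Section Veronese.
Variable B : idomainType.
Variable G : int -> B -> Prop.
Hypothesis HG : is_Zgrading G.
Local Notation hcomp := (hcomp HG).
Variable d' : nat.
Local Notation d := d'.+1.
Local Notation A := (veronese G d).

Lemma veronese0 : A 0.
Proof. by apply/(veroneseP HG); apply: deg_cong0. Qed.

Lemma veroneseD x y : A x -> A y -> A (x + y).
Proof. by move=> /(veroneseP HG) hx /(veroneseP HG) hy; apply/(veroneseP HG); apply: deg_congD. Qed.

Lemma veroneseM x y : A x -> A y -> A (x * y).
Proof.
move=> /(veroneseP HG) hx /(veroneseP HG) hy; apply/(veroneseP HG).
by have := deg_congM hx hy; rewrite addr0.
Qed.

Lemma veronese_hcomp x i : A x -> A (hcomp x i).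
Proof.
move=> /(veroneseP HG) hx; have [->|hi] := eqVneq (hcomp x i) 0; first exact: veronese0.
by apply: (veronese_hom HG (hcompP HG x i)); have := hx i hi; rewrite subr0.
Qed.

Lemma veronese_expd i h : G i h -> A (h ^+ d).
Proof. by move=> hh; apply: (veronese_hom HG (gradingX HG d hh) (dvdz_mulr _ (dvdzz _))). Qed.

Lemma grading_dpow n i h : G i h -> G (n.-1%:Z * i) (dpow n h).
Proof.
move=> hh; rewrite -[_ * i]add0r; apply: (gradingM HG _ (gradingX HG _ hh)).
elim: n => [|n IH]; first exact: grading0.
by rewrite -addn1 natrD; apply: (gradingD HG IH); apply: grading1.
Qed.

Lemma dpow_neq0 (h : B) : d%:R != 0 :> B -> h != 0 -> dpow d h != 0.
Proof. by move=> d0 h0; rewrite mulf_neq0 // expf_neq0. Qed.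

(* [dpow d h * D h = D (h ^+ d)] with [h ^+ d] in [B^(d)] for homogeneous [h]. *)
Lemma derivation_veronese_eq (D1 D2 : B -> B) :
  d%:R != 0 :> B -> derivation D1 -> derivation D2 ->
  (forall x, A x -> D1 x = D2 x) -> forall x, D1 x = D2 x.
Proof.
move=> d0 hD1 hD2 hag x; rewrite (hcomp_sum HG x) !derivation_sum //.
apply: eq_bigr => i _; set h := hcomp x i.
have [->|h0] := eqVneq h 0; first by rewrite !derivation0.
apply: (mulfI (dpow_neq0 d0 h0)).
by rewrite -!derivationX // hag //; apply: veronese_expd (hcompP HG x i).
Qed.

Variable delta : B -> B.
Hypothesis hdelta : derivation_on A delta.

Lemma veronese_delta x : A x -> A (delta x).
Proof. by case: hdelta => h _ _; apply: h. Qed.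

Lemma veronese_deltaD x y : A x -> A y -> delta (x + y) = delta x + delta y.
Proof. by case: hdelta => _ h _; apply: h. Qed.

Lemma veronese_deltaM x y : A x -> A y -> delta (x * y) = x * delta y + y * delta x.
Proof. by case: hdelta => _ _ h; apply: h. Qed.

Lemma veronese_delta0 : delta 0 = 0.
Proof. exact: (@derivation_on0 _ A veronese0 _ hdelta). Qed.

Lemma veronese_delta_sum (I : Type) (r : seq I) (F : I -> B) :
  (forall l, A (F l)) -> delta (\sum_(l <- r) F l) = \sum_(l <- r) delta (F l).
Proof. exact: (@derivation_on_sum _ A veronese0 veroneseD _ hdelta). Qed.

Lemma veronese_deltaX x n : A x -> delta (x ^+ n.+1) = dpow n.+1 x * delta x.
Proof. exact: (@derivation_onX _ A veroneseM _ hdelta). Qed.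

Lemma veronese_delta_expdM i j b u : G i b -> G j u -> (d%:Z %| i + j)%Z ->
  dpow d (b * u) * delta (b * u) = b ^+ d * delta (u ^+ d) + u ^+ d * delta (b ^+ d).
Proof.
move=> hb hu hdiv; rewrite -veronese_deltaX; last exact: (veronese_hom HG (gradingM HG hb hu) hdiv).
by rewrite exprMn veronese_deltaM //; [exact: veronese_expd hb | exact: veronese_expd hu].
Qed.

End Veronese.

Section Extension.
Variable B : idomainType.
Variable G : int -> B -> Prop.
Hypothesis HG : is_Zgrading G.
Local Notation hcomp := (hcomp HG).
Local Notation hsupp := (hsupp HG).
Variable d' : nat.
Local Notation d := d'.+1.
Local Notation A := (veronese G d).
Hypothesis d_neq0 : d%:R != 0 :> B.
Variable delta : B -> B.
Hypothesis hdelta : derivation_on A delta.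
Hypothesis hdiv : forall i h, G i h -> h != 0 -> exists y, dpow d h * y = delta (h ^+ d).

Definition Dhom (h : B) : B :=
  if h == 0 then 0 else epsilon (inhabits 0) (fun y => dpow d h * y = delta (h ^+ d)).

Lemma Dhom0 : Dhom 0 = 0. Proof. by rewrite /Dhom eqxx. Qed.

Lemma DhomP i h : G i h -> dpow d h * Dhom h = delta (h ^+ d).
Proof.
move=> hh; have [->|h0] := eqVneq h 0.
  by rewrite Dhom0 mulr0 expr0n /= (veronese_delta0 HG hdelta).
rewrite /Dhom (negbTE h0).
exact: (epsilon_spec (inhabits 0) (fun y => dpow d h * y = _) (hdiv hh h0)).
Qed.

Lemma Dhom_veronese i h : G i h -> (d%:Z %| i)%Z -> Dhom h = delta h.
Proof.
move=> hh hd; have [->|h0] := eqVneq h 0; first by rewrite Dhom0 (veronese_delta0 HG hdelta).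
apply: (mulfI (dpow_neq0 d_neq0 h0)); rewrite (DhomP hh) (veronese_deltaX HG hdelta) //.
exact: (veronese_hom HG hh hd).
Qed.

Lemma DhomM i j h g : G i h -> G j g -> Dhom (h * g) = h * Dhom g + g * Dhom h.
Proof.
move=> hh hg; have [->|h0] := eqVneq h 0; first by rewrite mul0r Dhom0 mul0r mulr0 addr0.
have [->|g0] := eqVneq g 0; first by rewrite mulr0 Dhom0 mul0r mulr0 addr0.
apply: (mulfI (dpow_neq0 d_neq0 (mulf_neq0 h0 g0))).
rewrite (DhomP (gradingM HG hh hg)) exprMn.
rewrite (veronese_deltaM hdelta (veronese_expd HG d' hh) (veronese_expd HG d' hg)).
by rewrite -(DhomP hh) -(DhomP hg) /dpow /= !exprS exprMn; ring.
Qed.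

(* Expresses [Dhom h] through values of [delta] on [B^(d)] only, which makes the
   additivity of [Dhom] on each degree visible. *)
Lemma Dhom_shift i j h u : G i h -> G j u -> (d%:Z %| i + j)%Z ->
  dpow d u * u * Dhom h = dpow d u * delta (h * u) - h * delta (u ^+ d).
Proof.
move=> hh hu hd; have [->|h0] := eqVneq h 0.
  by rewrite Dhom0 !mul0r (veronese_delta0 HG hdelta) !mulr0 subrr.
apply: (mulfI (dpow_neq0 d_neq0 h0)).
have e := veronese_delta_expdM HG hdelta hh hu hd.
rewrite (_ : dpow d h * (dpow d u * u * Dhom h) = dpow d u * u * (dpow d h * Dhom h)); last by ring.
rewrite (DhomP hh) (_ : dpow d h * (dpow d u * delta (h * u) - h * delta (u ^+ d))
  = d%:R * (dpow d (h * u) * delta (h * u)) - d%:R * h ^+ d * delta (u ^+ d)).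
  by rewrite e /dpow /= !exprS; ring.
by rewrite /dpow /= !exprS exprMn; ring.
Qed.

Lemma DhomD i h1 h2 : G i h1 -> G i h2 -> Dhom (h1 + h2) = Dhom h1 + Dhom h2.
Proof.
move=> hh1 hh2.
have [[h0 [hh0 h00]]|hno] := classic (exists h0, G i h0 /\ h0 != 0); last first.
  have z h : G i h -> h = 0 by move=> hh; apply: NNPP => /eqP h0; apply: hno; exists h.
  by rewrite (z _ hh1) (z _ hh2) addr0 Dhom0 addr0.
pose u := h0 ^+ d'.
have hu : G (d'%:Z * i) u := gradingX HG d' hh0.
have u0 : u != 0 by apply: expf_neq0.
have hdu : (d%:Z %| i + d'%:Z * i)%Z := dvdz_add_mul_pred d' i.
apply: (mulfI (mulf_neq0 (dpow_neq0 d_neq0 u0) u0)).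
rewrite mulrDr (Dhom_shift (gradingD HG hh1 hh2) hu hdu) (Dhom_shift hh1 hu hdu).
rewrite (Dhom_shift hh2 hu hdu) mulrDl (veronese_deltaD hdelta); first by ring.
  exact: (veronese_hom HG (gradingM HG hh1 hu) hdu).
exact: (veronese_hom HG (gradingM HG hh2 hu) hdu).
Qed.

Definition Dext (x : B) := \sum_(i <- hsupp x) Dhom (hcomp x i).

Lemma Dext_superset x t : uniq t -> {subset hsupp x <= t} ->
  Dext x = \sum_(i <- t) Dhom (hcomp x i).
Proof.
move=> ut st; rewrite /Dext -(sum_superset _ (hsupp_uniq HG x) ut st); apply: eq_bigr => i _.
by case: ifP => // /negbT /hcomp_notin ->; rewrite Dhom0.
Qed.

Lemma DextD x y : Dext (x + y) = Dext x + Dext y.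
Proof.
set t := undup (hsupp x ++ hsupp y ++ hsupp (x + y)).
have ut : uniq t by exact: undup_uniq.
rewrite (@Dext_superset (x + y) t) ?(@Dext_superset x t) ?(@Dext_superset y t) //;
  try by move=> k hk; rewrite mem_undup !mem_cat hk ?orbT.
rewrite -big_split; apply: eq_bigr => i _.
by rewrite hcompD (DhomD (hcompP HG x i) (hcompP HG y i)).
Qed.

Lemma Dext0 : Dext 0 = 0.
Proof. by rewrite /Dext big1 // => i _; rewrite hcomp0 Dhom0. Qed.

Lemma Dext_sum (I : Type) (r : seq I) (F : I -> B) :
  Dext (\sum_(l <- r) F l) = \sum_(l <- r) Dext (F l).
Proof. exact: (big_morph Dext DextD Dext0). Qed.

Lemma Dext_hom i h : G i h -> Dext h = Dhom h.
Proof.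
move=> hh; rewrite (@Dext_superset h (undup (i :: hsupp h))) ?undup_uniq //; last first.
  by move=> k hk; rewrite mem_undup inE hk orbT.
rewrite (eq_bigr (fun k => if k == i then Dhom h else 0)).
  by rewrite sum_pred1_seq ?undup_uniq // mem_undup mem_head.
by move=> k _; rewrite (hcomp_hom HG hh); case: ifP; rewrite ?Dhom0.
Qed.

Lemma DextM x y : Dext (x * y) = x * Dext y + y * Dext x.
Proof.
transitivity (\sum_(i <- hsupp x) \sum_(j <- hsupp y)
   (hcomp x i * Dhom (hcomp y j) + hcomp y j * Dhom (hcomp x i))).
  rewrite {1}(hcomp_sum HG x) {1}(hcomp_sum HG y) mulr_suml Dext_sum; apply: eq_bigr => i _.
  rewrite mulr_sumr Dext_sum; apply: eq_bigr => j _.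
  have [hi hj] := (hcompP HG x i, hcompP HG y j).
  by rewrite (Dext_hom (gradingM HG hi hj)) (DhomM hi hj).
rewrite (eq_bigr _ (fun i _ => big_split _ _ _ _ _)) big_split /=; congr (_ + _).
  rewrite exchange_big /Dext mulr_sumr; apply: eq_bigr => j _.
  by rewrite -mulr_suml -(hcomp_sum HG).
rewrite /Dext mulr_sumr; apply: eq_bigr => i _.
by rewrite -mulr_suml -(hcomp_sum HG).
Qed.

Lemma Dext_derivation : derivation Dext.
Proof. split; [exact: DextD | exact: DextM]. Qed.

Lemma Dext_veronese x : A x -> Dext x = delta x.
Proof.
move=> hx; rewrite {2}(hcomp_sum HG x) (veronese_delta_sum HG hdelta); last first.
  by move=> l; apply: veronese_hcomp.
apply: eq_bigr => i _; have [->|hi] := eqVneq (hcomp x i) 0.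
  by rewrite Dhom0 (veronese_delta0 HG hdelta).
apply: Dhom_veronese (hcompP HG x i) _.
by move/(veroneseP HG): hx => /(_ i hi); rewrite subr0.
Qed.

End Extension.

Section Divisibility.
Variable B : idomainType.
Variable G : int -> B -> Prop.
Hypothesis HG : is_Zgrading G.
Hypothesis hN : noetherian B.
Hypothesis hnorm : normal_domain B.
Hypothesis hsat : saturated_in_codim1 G.
Variable d' : nat.
Local Notation d := d'.+1.
Hypothesis d_unit : d%:R \is a @GRing.unit B.
Variable delta : B -> B.
Hypothesis hdelta : derivation_on (veronese G d) delta.
Local Notation tf := (@FracField.tofrac B).

Lemma veronese_dpow_dvd i b : G i b -> b != 0 -> exists y, dpow d b * y = delta (b ^+ d).
Proof.
move=> hb b0; apply: NNPP => hno.
have tf_dpow0 : tf (dpow d b) != 0.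
  by rewrite tofrac_eq0 dpow_neq0 //; apply: contraTneq d_unit => ->; rewrite unitr0.
pose z := tf (delta (b ^+ d)) / tf (dpow d b).
have [|P [hP1 hcol]] := conductor_height_one hN hnorm (z := z).
  move=> [y ey]; apply: hno; exists y; apply: tofrac_inj.
  by rewrite tofracM ey /z mulrC divfK.
have [hP _ _] := hP1.
have hPc c s : dpow d b * s = c * delta (b ^+ d) -> P c.
  move=> e; apply: hcol; exists s; apply: (mulfI tf_dpow0).
  by rewrite -tofracM e tofracM /z mulrCA [tf (dpow d b) * _]mulrC divfK.
have [j [u [hu hPu hdeg]]] : exists j u, [/\ G j u, ~ P u & (d%:Z %| i + j)%Z].
  have [hPb|hPb] := classic (P b).
    exact: (exists_hom_notin_dvd_deg HG hsat hP1 (ltn0Sn d') hb b0 hPb).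
  exists (d'%:Z * i), (b ^+ d'); split; rewrite ?dvdz_add_mul_pred //.
  - exact: gradingX.
  - exact: prime_notinX.
have [dinv hdinv] : exists dinv, d%:R * dinv = 1 :> B := ex_intro _ d%:R^-1 (mulrV d_unit).
apply: (prime_notinX (n := d) hP hPu).
apply: (hPc _ (u ^+ d' * delta (b * u) - b * delta (u ^+ d) * dinv)).
transitivity (dpow d (b * u) * delta (b * u) - b ^+ d * delta (u ^+ d) * (d%:R * dinv)).
  by rewrite /dpow /= !exprS exprMn; ring.
by rewrite (veronese_delta_expdM HG hdelta hb hu hdeg) hdinv mulr1 addrAC subrr add0r.
Qed.

End Divisibility.

(** * Local nilpotency *)

Lemma deg_cong_homMK (B : idomainType) (G : int -> B -> Prop) (HG : is_Zgrading G)
    (d : nat) (r e : int) (h y : B) :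
  G e h -> h != 0 -> deg_cong HG d r (h * y) -> deg_cong HG d (r - e) y.
Proof.
move=> hh h0 hy k hk; rewrite (_ : k - (r - e) = k + e - r); last by ring.
by apply: hy; rewrite (hcompMl_hom HG y (k + e) hh) addrK mulf_neq0.
Qed.

Section LocallyNilpotent.
Variable B : idomainType.
Variable G : int -> B -> Prop.
Hypothesis HG : is_Zgrading G.
Hypothesis hQ : contains_Q B.
Variable d' : nat.
Local Notation d := d'.+1.
Local Notation A := (veronese G d).
Variable delta : B -> B.
Hypothesis hdelta : derivation_on A delta.
Hypothesis hdiv : forall i h, G i h -> h != 0 -> exists y, dpow d h * y = delta (h ^+ d).
Hypothesis hLN : locally_nilpotent_on A delta.
Let d_neq0 : d%:R != 0 :> B := contains_Q_natr_neq0 d' hQ.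
Local Notation E := (Dext HG d' delta).
Let hE : derivation E := Dext_derivation HG d_neq0 hdelta hdiv.

Lemma iter_Dext_veronese x n : A x -> iter n E x = iter n delta x /\ A (iter n delta x).
Proof.
move=> hx; elim: n => [|n [IH1 IH2]] //=.
rewrite IH1 (Dext_veronese HG d_neq0 hdelta hdiv IH2).
by split=> //; apply: (veronese_delta hdelta).
Qed.

Lemma Dext_nilpotent_veronese x : A x -> exists p, iter p E x = 0.
Proof.
move=> hx; have [n [_ hn]] := hLN hx; exists n.
by rewrite (proj1 (iter_Dext_veronese n hx)).
Qed.

Lemma Dext_hom_deg_cong i h : G i h -> deg_cong HG d i (E h).
Proof.
move=> hh; rewrite (Dext_hom HG d' delta hh).
have [->|h0] := eqVneq h 0; first by rewrite Dhom0; apply: deg_cong0.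
have hA : A (dpow d h * Dhom d' delta h).
  rewrite (DhomP HG hdelta hdiv hh); apply: (veronese_delta hdelta).
  exact: (veronese_expd HG d' hh).
move/(veroneseP HG)/(deg_cong_homMK (grading_dpow HG d hh) (dpow_neq0 d_neq0 h0)): hA.
by apply: deg_cong_shift; rewrite /= sub0r -opprD rpredN addrC dvdz_add_mul_pred.
Qed.

Lemma Dext_deg_cong r x : deg_cong HG d r x -> deg_cong HG d r (E x).
Proof.
move=> hx; apply: deg_cong_sum => i.
have [->|hi] := eqVneq (hcomp HG x i) 0; first by rewrite Dhom0; apply: deg_cong0.
rewrite -(Dext_hom HG d' delta (hcompP HG x i)).
exact: deg_cong_shift (hx i hi) (Dext_hom_deg_cong (hcompP HG x i)).
Qed.

Section HomogeneousElement.
Variables (i : int) (b : B).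
Hypothesis hb : G i b.
Hypothesis b0 : b != 0.

Let c n := b ^+ d' * iter n E b.

Lemma iter_Dext_veronese_hom n : A (c n).
Proof.
apply/(veroneseP HG).
have hn : deg_cong HG d i (iter n E b).
  by elim: n => [|n IH]; [exact: deg_cong_hom | rewrite iterS; apply: Dext_deg_cong].
rewrite /c; apply: (deg_cong_shift _ (deg_congM (deg_cong_hom d (gradingX HG d' hb)) hn)).
by rewrite subr0 addrC dvdz_add_mul_pred.
Qed.

Lemma iter_Dext_hom_step n :
  d%:R * b ^+ d * c n.+1 = d%:R * b ^+ d * E (c n) - d'%:R * E (b ^+ d) * c n.
Proof.
rewrite /c (derivationM hE) (derivationX hE) iterS.
apply/eqP; rewrite -subr_eq0; apply/eqP.
transitivity (- (d%:R * iter n E b * b ^+ d' * (b * E (b ^+ d') - d'%:R * b ^+ d' * E b))).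
  by rewrite /dpow /= exprS; ring.
by rewrite mulr_derivationX // subrr mulr0 oppr0.
Qed.

(* With [a = b ^+ d] of exact order [k], induction on [n] gives [E^(k.+1 - n) (c n) = 0]:
   the step multiplies by [a] and cancels it with [iter_derivation_cancel]. *)
Lemma Dext_nilpotent_hom : exists n, iter n E b = 0.
Proof.
set a := b ^+ d.
have hAa : A a := veronese_expd HG d' hb.
have [k [hk1 hk2]] := nilpotency_order (expf_neq0 d b0) (Dext_nilpotent_veronese hAa).
have claim n : (n <= k.+1)%N -> iter (k.+1 - n) E (c n) = 0.
  elim: n => [|n IH] hn; first by rewrite subn0 /c -exprSr.
  have IH' : iter (k - n).+1 E (c n) = 0.
    by rewrite -subSn; [apply: IH; apply: ltnW | rewrite -ltnS].
  rewrite subSS; set m := (k - n)%N.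
  have nil_c := Dext_nilpotent_veronese (iter_Dext_veronese_hom n.+1).
  apply: (iter_derivation_cancel hE hQ hk1 hk2 nil_c).
  apply: (mulfI d_neq0); rewrite mulr0 -iter_derivation_natmul // mulrA iter_Dext_hom_step.
  rewrite iter_derivationD // iter_derivationN // -!mulrA !iter_derivation_natmul //.
  have -> : iter (k + m) E (a * E (c n)) = 0.
    have := iter_derivationM_eq0 hE hk2 (_ : iter m E (E (c n)) = 0).
    by rewrite addSn; apply; rewrite -iterSr.
  have -> : iter (k + m) E (E a * c n) = 0.
    have := iter_derivationM_eq0 hE (_ : iter k E (E a) = 0) IH'.
    by rewrite addnS; apply; rewrite -iterSr.
  by rewrite !mulr0 subrr.
exists k.+1; have := claim k.+1 (leqnn _); rewrite subnn /c => /eqP.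
by rewrite mulf_eq0 expf_eq0 (negbTE b0) andbF => /eqP.
Qed.

End HomogeneousElement.

Lemma Dext_locally_nilpotent : locally_nilpotent E.
Proof.
move=> x _; suff [n hn] : exists n, iter n E x = 0.
  by exists n.+1; split => //; rewrite iterS hn (derivation0 hE).
rewrite (hcomp_sum HG x); elim: (hsupp HG x) => [|j s [n hn]]; first by exists 0%N; rewrite big_nil.
have [p hp] : exists p, iter p E (hcomp HG x j) = 0.
  have [->|h0] := eqVneq (hcomp HG x j) 0; first by exists 0%N.
  exact: Dext_nilpotent_hom (hcompP HG x j) h0.
exists (p + n)%N; rewrite big_cons (iter_derivationD hE) (iter_derivation_eq0 hE p hn).
by rewrite addnC (iter_derivation_eq0 hE n hp) addr0.
Qed.

End LocallyNilpotent.

Unset Implicit Arguments.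

Theorem corollary1p4 (B : idomainType) (G : int -> B -> Prop) :
  is_Zgrading G -> noetherian B -> normal_domain B -> contains_Q B ->
  saturated_in_codim1 G ->
  forall d : nat, (0 < d)%N ->
  (forall delta : B -> B, derivation_on (veronese G d) delta ->
     exists D : B -> B,
       [/\ derivation D, (forall x, veronese G d x -> D x = delta x) &
           forall D' : B -> B, derivation D' ->
             (forall x, veronese G d x -> D' x = delta x) -> forall x, D' x = D x])
  /\
  (forall delta : B -> B, derivation_on (veronese G d) delta ->
     locally_nilpotent_on (veronese G d) delta ->
     exists D : B -> B,
       [/\ derivation D, locally_nilpotent D, (forall x, veronese G d x -> D x = delta x) &
           forall D' : B -> B, derivation D' -> locally_nilpotent D' ->
             (forall x, veronese G d x -> D' x = delta x) -> forall x, D' x = D x]).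
Proof.
move=> HG hN hnorm hQ hsat [|d'] // _.
have d_neq0 : d'.+1%:R != 0 :> B := contains_Q_natr_neq0 d' hQ.
have hdiv := veronese_dpow_dvd HG hN hnorm hsat (hQ d').
have ext delta (hdelta : derivation_on (veronese G d'.+1) delta) :
    [/\ derivation (Dext HG d' delta),
        forall x, veronese G d'.+1 x -> Dext HG d' delta x = delta x &
        forall D', derivation D' -> (forall x, veronese G d'.+1 x -> D' x = delta x) ->
          forall x, D' x = Dext HG d' delta x].
  have hD := Dext_derivation HG d_neq0 hdelta (hdiv _ hdelta).
  have hag := Dext_veronese HG d_neq0 hdelta (hdiv _ hdelta).
  split=> // D' hD' hag'; apply: (derivation_veronese_eq HG d_neq0 hD' hD) => x hx.
  by rewrite hag' ?hag.
split=> [delta /ext [hD hag huniq] | delta hdelta hLN]; first by exists (Dext HG d' delta).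
have [hD hag huniq] := ext _ hdelta.
exists (Dext HG d' delta); split=> // [|D' hD' _]; last exact: huniq.
exact: (Dext_locally_nilpotent HG hQ hdelta (hdiv _ hdelta) hLN).
Qed.
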